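(* Consider the CSMA scheduler described in the context, and assume time-scale separation, i.e. at the first slot $t=nT$ of every super slot $n\ge 0$ the link schedule produced by the scheduler is distributed according to the stationary distribution of the Markov chain it induces for the current (fixed) weights. Let $0<\theta,\delta<1$ and let $\Phi_3^*(t)=\max\Phi_3(t)$, the maximum being over all feasible $(x_i(t),\mu_{mi}(t))$. If $$\Phi_3^*(t)\geq \frac{1}{\theta}\Big(|\mathcal{E}|\log 2+\log\frac{1}{\delta}\Big),$$ then at any slot $t=nT$, $n\ge 0$, with probability greater than $1-\delta$ the scheduler produces a schedule $\mu_{mi}(t)$ with $$\Phi_3(t)\geq (1-\theta)\,\Phi_3^*(t).$$
   Context: Setting: link set $\mathcal{E}$, each link $i$ with interference set $\mathcal{C}_i$; job types $\mathcal{M}$ with sizes $s_m$, $s^{max}=\max_m s_m$; nonnegative queue values $Q_{mi}(t),Z_{mi}(t)$ for $m\in\mathcal{M},i\in\mathcal{E}$. A feasible decision is $x_i(t)\in\{0,1\}$ with $x_i(t)+x_j(t)\le 1$ for all $j\in\mathcal{C}_i$, and $\mu_{mi}(t)\in\{0,1\}$ with $\sum_m\mu_{mi}(t)=x_i(t)$. Define $\Phi_3(t)=\sum_{m\in\mathcal{M}}\sum_{i\in\mathcal{E}}\mu_{mi}(t)\,[Q_{mi}(t)+Z_{mi}(t)]$, link weights $w_i(t)=\max_m\{Q_{mi}(t)+Z_{mi}(t)\}$ and $p_i=e^{w_i(t)}/(1+e^{w_i(t)})$. CSMA scheduler: time is divided into super slots of $T\ge s^{max}$ slots. At $t=nT$: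 (control phase) each link $i$ picks $T_i$ uniformly from $\{0,\dots,W-1\}$ (mini-slots); if it hears an INTENT message from a link in $\mathcal{C}_i$ before mini-slot $T_i+1$ it sets $z_i(t)=0$, otherwise it broadcasts INTENT at mini-slot $T_i+1$ and sets $z_i(t)=1$ if no collision, $z_i(t)=0$ if collision. (Scheduling phase) if $z_i(t)=0$ then $x_i(t)=x_i(t-1)$; if $z_i(t)=1$ and some $j\in\mathcal{C}_i$ had $x_j(t-1)=1$ then $x_i(t)=0$; otherwise $x_i(t)=1$ with probability $p_i$ and $0$ with probability $1-p_i$. An active link serves (sets $\mu_{mi}=1$ for) a job type maximizing $Q_{mi}(t)+Z_{mi}(t)$. At $t=nT+\tau$, $0<\tau<T$: $x_i(t)=x_i(nT)$; an active link continues an unfinished job of its current type, otherwise starts a job of a type $m$ maximizing $Q_{mi}(t)+Z_{mi}(t)$ among those with $(n+1)T-t\ge s_m$. *)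

From mathcomp Require Import all_boot all_order all_algebra.
From mathcomp Require Import all_classical all_reals all_analysis.
Set Implicit Arguments. Unset Strict Implicit. Unset Printing Implicit Defensive.
Import Order.TTheory GRing.Theory Num.Theory.
Local Open Scope ring_scope.

(* Links: a finType E; interference sets: C i j  <=>  j \in C_i.
   Job types: a finType M.  Queue values Q Z : M -> E -> R. *)

Definition feasible_x (E : finType) (C : rel E) (x : {ffun E -> bool}) : bool :=
  [forall i, forall j, C i j ==> ~~ (x i && x j)].

Definition feasible (E M : finType) (C : rel E)
    (x : {ffun E -> bool}) (mu : {ffun M * E -> bool}) : bool :=
  feasible_x C x &&
  [forall i, (\sum_(m : M) (mu (m, i) : nat))%N == (x i : nat)].

Definition Phi3 (R : realType) (E M : finType) (Q Z : M -> E -> R)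
    (mu : {ffun M * E -> bool}) : R :=
  \sum_(m : M) \sum_(i : E) (mu (m, i))%:R * (Q m i + Z m i).

(* Phi_3^* : maximum of Phi_3 over all feasible (x, mu) (the all-zero
   decision is feasible and Phi_3 >= 0, so 0 is a harmless seed). *)
Definition Phi3star (R : realType) (E M : finType) (C : rel E)
    (Q Z : M -> E -> R) : R :=
  \big[Num.max/0]_(p : {ffun E -> bool} * {ffun M * E -> bool} |
                     feasible C p.1 p.2) Phi3 Q Z p.2.

Definition weight (R : realType) (E M : finType) (Q Z : M -> E -> R) (i : E) : R :=
  \big[Num.max/0]_(m : M) (Q m i + Z m i).

Definition pact (R : realType) (E M : finType) (Q Z : M -> E -> R) (i : E) : R :=
  expR (weight Q Z i) / (1 + expR (weight Q Z i)).

(* ---- control phase ----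
   b : {ffun E -> 'I_W} are the back-off values T_i.  Link i broadcasts
   INTENT (at mini-slot T_i + 1) iff it has not heard an INTENT from a link
   j in C_i that broadcast at an earlier mini-slot.  Defined by recursion
   with fuel; fuel W is always sufficient since back-off values are < W. *)
Fixpoint bcast_fuel (E : finType) (C : rel E) (W : nat) (b : {ffun E -> 'I_W})
    (n : nat) (i : E) : bool :=
  if n is n'.+1 then
    ~~ [exists j, [&& C i j, (b j < b i)%N & bcast_fuel C b n' j]]
  else true.

Definition bcast (E : finType) (C : rel E) (W : nat) (b : {ffun E -> 'I_W})
    (i : E) : bool := bcast_fuel C b W i.

Definition zdec (E : finType) (C : rel E) (W : nat) (b : {ffun E -> 'I_W})
    (i : E) : bool :=
  bcast C b i && ~~ [exists j, [&& C i j, bcast C b j & (b j == b i :> nat)]].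

Definition link_trans (R : realType) (E M : finType) (C : rel E)
    (Q Z : M -> E -> R) (z : bool) (x : {ffun E -> bool}) (i : E) (xi' : bool) : R :=
  if z then
    (if [exists j, C i j && x j] then (xi' == false)%:R
     else if xi' then pact Q Z i else 1 - pact Q Z i)
  else (xi' == x i)%:R.

(* Transition matrix of the Markov chain induced on link schedules at the
   super-slot boundaries (weights held fixed): back-offs are i.i.d. uniform
   on {0,...,W-1}, and given the decision schedule z the links update
   independently. *)
Definition csma_kernel (R : realType) (E M : finType) (C : rel E) (W : nat)
    (Q Z : M -> E -> R) (x y : {ffun E -> bool}) : R :=
  \sum_(b : {ffun E -> 'I_W})
     (W ^ #|E|)%:R^-1 * \prod_(i : E) link_trans C Q Z (zdec C b i) x i (y i).

Definition stationary (R : realType) (E M : finType) (C : rel E) (W : nat)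
    (Q Z : M -> E -> R) (pi : {ffun E -> bool} -> R) : Prop :=
  [/\ forall x, 0 <= pi x,
      \sum_x pi x = 1,
      forall x, ~~ feasible_x C x -> pi x = 0
    & forall y, \sum_x pi x * csma_kernel C W Q Z x y = pi y].

(* service decision of the scheduler: an active link serves the type
   sel i, where sel i maximizes Q_mi + Z_mi *)
Definition sched_mu (E M : finType) (sel : E -> M) (x : {ffun E -> bool})
    : {ffun M * E -> bool} :=
  [ffun mi : M * E => x mi.2 && (mi.1 == sel mi.2)].

(* With the weights frozen, the CSMA chain on link schedules is reversible
   with respect to the Gibbs weight g(x) = [x feasible] exp(sum_i x_i w_i):
   two interfering links never both win the control phase, and a winning link
   without active neighbours switches on with odds e^(w_i) : 1.  Giving one
   link the unique smallest back-off makes any single-link toggle between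
   feasible schedules possible, so the chain is irreducible on them, and the
   maximum principle for the harmonic function pi/g forces every stationary pi
   to be proportional to g.  Since the scheduler serves a type of maximal
   weight, g(x) = exp(Phi_3(x)) on feasible x.  Each of the fewer than 2^|E|
   schedules with Phi_3 < (1 - theta) Phi_3^* thus has mass at most
   exp(-theta Phi_3^* ), and 2^|E| exp(-theta Phi_3^* ) <= delta. *)

From mathcomp Require Import all_boot all_order all_algebra.
From mathcomp Require Import all_classical all_reals all_analysis.
From mathcomp Require Import ring lra zify.

Set Implicit Arguments.
Unset Strict Implicit.
Import Order.TTheory GRing.Theory Num.Theory.
Local Open Scope ring_scope.

Lemma harmonic_max_step (R : realType) (T : finType) (K : T -> T -> R)
    (h : T -> R) (hmax : R) u v :
  (forall x, 0 <= K u x) -> \sum_x K u x = 1 -> h u = \sum_x K u x * h x ->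
  (forall x, h x <= hmax) -> h u = hmax -> 0 < K u v -> h v = hmax.
Proof.
move=> K_ge0 K_sum1 h_harm h_le hu Kuv.
have gap0 : \sum_x K u x * (hmax - h x) = 0.
  under eq_bigr do rewrite mulrBr.
  by rewrite sumrB -mulr_suml K_sum1 mul1r -h_harm hu subrr.
have gap_ge0 x : true -> 0 <= K u x * (hmax - h x).
  by move=> _; rewrite mulr_ge0 // subr_ge0.
move/eqP: (@psumr_eq0P _ _ _ _ gap_ge0 gap0 v isT); rewrite mulf_eq0 => /orP [/eqP K0|].
  by move: Kuv; rewrite K0 ltxx.
by rewrite subr_eq0 => /eqP.
Qed.

Lemma gibbs_mass_lt (R : realType) (T : finType) (g pi : T -> R) (c a b : R)
    (bad : pred T) (xs : T) :
  (forall x, 0 <= g x) -> (forall x, pi x = c * g x) -> \sum_x pi x = 1 ->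
  0 < a -> 0 < b -> a <= g xs -> ~~ bad xs -> (forall x, bad x -> g x <= b) ->
  \sum_(x | bad x) pi x < #|T|%:R * b / a.
Proof.
move=> g_ge0 pi_g pi_sum1 a_gt0 b_gt0 a_le bad_xs bad_le.
pose G := \sum_x g x.
have aG : a <= G.
  by apply: (le_trans a_le); rewrite /G (bigD1 xs) //= lerDl sumr_ge0.
have G_gt0 : 0 < G by apply: lt_le_trans aG.
have cG : c = G^-1.
  have cG1 : c * G = 1.
    by rewrite -pi_sum1 /G mulr_sumr; apply: eq_bigr => x _; rewrite pi_g.
  by rewrite -(mulfK (lt0r_neq0 G_gt0) c) cG1 div1r.
have card_bad : (#|bad| < #|T|)%N.
  rewrite -(cardC bad) -{1}[#|bad|]addn0 ltn_add2l.
  by apply/card_gt0P; exists xs.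
rewrite (eq_bigr (fun x => g x / G)); last by move=> x _; rewrite pi_g cG mulrC.
rewrite -mulr_suml; apply: (@le_lt_trans _ _ (#|bad|%:R * b / a)).
  apply: (le_trans (ler_wpM2r _ (ler_sum _ bad_le))); first by rewrite invr_ge0 ltW.
  rewrite sumr_const -[b *+ _]mulr_natl ler_wpM2l ?mulr_ge0 ?ler0n ?(ltW b_gt0) //.
  by rewrite lef_pV2 ?posrE.
by rewrite ltr_pM2r ?invr_gt0 // ltr_pM2r // ltr_nat.
Qed.

Lemma pow2_expR_tail_le (R : realType) (N : nat) (theta delta P : R) :
  0 < theta -> 0 < delta -> theta^-1 * (N%:R * ln 2 + ln delta^-1) <= P ->
  2 ^+ N * expR ((1 - theta) * P) / expR P <= delta.
Proof.
move=> th_gt0 d_gt0 hP.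
have tail : N%:R * ln 2 + ln delta^-1 <= theta * P.
  by rewrite -(@ler_pM2l _ theta^-1) ?invr_gt0 // mulKf ?gt_eqF.
rewrite -expRN -mulrA -expRD (_ : _ + _ = - (theta * P)); last by ring.
rewrite expRN ler_pdivrMr ?expR_gt0 // mulrC.
move: tail; rewrite -ler_expR expRD expRM_natl lnK ?lnK ?posrE ?invr_gt0 //.
by rewrite ler_pdivrMr.
Qed.

Section Feasibility.
Variables (E : finType) (C : rel E).

Lemma feasible_xP (x : {ffun E -> bool}) :
  reflect (forall i j, C i j -> ~~ (x i && x j)) (feasible_x C x).
Proof.
apply: (iffP forallP) => [H i j Cij | H i].
  by have /forallP/(_ j)/implyP := H i; apply.
by apply/forallP => j; apply/implyP; apply: H.
Qed.

Definition idle_schedule : {ffun E -> bool} := [ffun => false].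

Definition deactivate (x : {ffun E -> bool}) (a : E) : {ffun E -> bool} :=
  [ffun j => (j != a) && x j].

Lemma feasible_idle : feasible_x C idle_schedule.
Proof. by apply/feasible_xP => i j _; rewrite ffunE. Qed.

Lemma feasible_deactivate x a : feasible_x C x -> feasible_x C (deactivate x a).
Proof.
move=> /feasible_xP fx; apply/feasible_xP => i j Cij; rewrite !ffunE.
by apply: contra (fx i j Cij) => /andP [/andP [_ ->] /andP [_ ->]].
Qed.

Lemma feasible_toggle_connected (P : {ffun E -> bool} -> Prop) :
  (forall u u' i, feasible_x C u -> feasible_x C u' ->
     (forall j, j != i -> u' j = u j) -> P u -> P u') ->
  forall x y, feasible_x C x -> feasible_x C y -> P x -> P y.
Proof.
move=> step.
suff idle_iff x : feasible_x C x -> P x <-> P idle_schedule.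
  by move=> x y fx fy /(idle_iff x fx) /(idle_iff y fy).
have : forall j, x j -> j \in enum E by move=> j _; rewrite mem_enum.
elim: (enum E) x => [|a s IH] x sub fx.
  suff -> : x = idle_schedule by [].
  by apply/ffunP => j; rewrite ffunE; apply/negbTE/negP => /sub.
have fx' := feasible_deactivate a fx.
have off_a j : j != a -> deactivate x a j = x j by rewrite ffunE => ->.
have on_a j : j != a -> x j = deactivate x a j by move/off_a.
rewrite -(IH (deactivate x a)) //; last first.
  move=> j; rewrite ffunE => /andP [ja /sub]; rewrite inE.
  by case/orP => // /eqP ja'; move: ja; rewrite ja' eqxx.
by split; apply: (step _ _ a).
Qed.

End Feasibility.

Section CsmaChain.
Variables (R : realType) (E M : finType) (C : rel E) (Q Z : M -> E -> R) (W : nat).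
Hypotheses (Csym : symmetric C) (Cirr : irreflexive C) (W2 : (2 <= W)%N).

Local Notation kernel := (csma_kernel C W Q Z).
Local Notation trans := (link_trans C Q Z).

Lemma pact_gt0 i : 0 < pact Q Z i.
Proof. by rewrite divr_gt0 ?expR_gt0 // addr_gt0 ?expR_gt0. Qed.

Lemma pact_lt1 i : pact Q Z i < 1.
Proof. by rewrite ltr_pdivrMr ?addr_gt0 ?expR_gt0 // mul1r ltrDr. Qed.

Lemma pact_odds i : pact Q Z i = expR (weight Q Z i) * (1 - pact Q Z i).
Proof.
rewrite /pact; set e := expR _.
have e1_neq0 : 1 + e != 0 by rewrite gt_eqF // addr_gt0 ?expR_gt0.
by field.
Qed.

Lemma link_trans_ge0 z x i v : 0 <= trans z x i v.
Proof.
rewrite /link_trans; case: z; last exact: ler0n.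
case: ifP => _; first exact: ler0n.
by case: v; rewrite ?subr_ge0 ltW ?pact_gt0 ?pact_lt1.
Qed.

Lemma link_trans_sum z x i : trans z x i true + trans z x i false = 1.
Proof.
rewrite /link_trans; case: z; last by case: (x i); rewrite ?addr0 ?add0r.
by case: ifP => _; rewrite ?add0r // addrC subrK.
Qed.

Lemma csma_kernel_ge0 x y : 0 <= kernel x y.
Proof.
apply: sumr_ge0 => b _; rewrite mulr_ge0 ?invr_ge0 ?ler0n //.
by apply: prodr_ge0 => i _; apply: link_trans_ge0.
Qed.

Lemma csma_kernel_sum1 x : \sum_y kernel x y = 1.
Proof.
rewrite exchange_big /= (eq_bigr (fun _ => (W ^ #|E|)%:R^-1)); last first.
  move=> b _; rewrite -mulr_sumr -(bigA_distr_bigA (fun i => trans _ x i)) /=.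
  by rewrite big1 ?mulr1 // => i _; rewrite big_bool /= link_trans_sum.
rewrite sumr_const card_ffun card_ord -[_ *+ _]mulr_natr mulVf //.
by rewrite pnatr_eq0 -lt0n expn_gt0 (ltnW W2).
Qed.

Lemma bcast_fuel_stable (b : {ffun E -> 'I_W}) n m j :
  (b j < n)%N -> (b j < m)%N -> bcast_fuel C b n j = bcast_fuel C b m j.
Proof.
have [k] := ubnP (b j); elim: k j n m => // k IH j [|n] [|m] // hk hn hm /=.
congr (~~ _); apply: eq_existsb => l.
by case: (C j l); case: (ltnP (b l) (b j)) => //= hl; rewrite (IH l n m); lia.
Qed.

Lemma bcastE (b : {ffun E -> 'I_W}) i :
  bcast C b i = ~~ [exists j, [&& C i j, (b j < b i)%N & bcast C b j]].
Proof.
rewrite /bcast.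
have -> : bcast_fuel C b W i = bcast_fuel C b W.-1.+1 i by rewrite prednK // ltnW.
congr (~~ _); apply: eq_existsb => j.
case: (C i j); case: (ltnP (b j) (b i)) => //= lt_ji.
by apply: bcast_fuel_stable; have := ltn_ord (b i); lia.
Qed.

Lemma zdec_independent (b : {ffun E -> 'I_W}) i j :
  C i j -> zdec C b i -> zdec C b j -> False.
Proof.
wlog le_ji : i j / (b j <= b i)%N.
  move=> wlog Cij zi zj; case: (leqP (b j) (b i)) => le.
    exact: (wlog i j le Cij zi zj).
  by apply: (wlog j i (ltnW le)); rewrite // Csym.
move=> Cij /andP [bi /existsPn no_tie] /andP [bj _].
have [eq_ji | ne_ji] := eqVneq (b j : nat) (b i).
  by have := no_tie j; rewrite Cij bj eq_ji eqxx.
move: bi; rewrite bcastE => /existsPn /(_ j).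
by rewrite Cij bj ltn_neqAle ne_ji le_ji.
Qed.

Lemma zdec_strict_min (b : {ffun E -> 'I_W}) i :
  (forall j, j != i -> (b i < b j)%N) -> zdec C b i.
Proof.
move=> min_i.
have neq_i j : C i j -> j != i by apply: contraTneq => ->; rewrite Cirr.
rewrite /zdec bcastE.
apply/andP; split; apply/existsPn => j; apply/negP.
  by case/and3P=> Cij + _; rewrite ltnNge ltnW ?min_i ?neq_i.
by case/and3P=> Cij _ /eqP eq_ji; have := min_i j (neq_i j Cij); rewrite eq_ji ltnn.
Qed.

Definition gibbs_factor (v : bool) i : R := if v then expR (weight Q Z i) else 1.

Definition gibbs (x : {ffun E -> bool}) : R :=
  (feasible_x C x)%:R * \prod_i gibbs_factor (x i) i.

Lemma gibbs_gt0 x : feasible_x C x -> 0 < gibbs x.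
Proof.
move=> fx; rewrite /gibbs fx mul1r; apply: prodr_gt0 => i _.
by rewrite /gibbs_factor; case: (x i); rewrite ?expR_gt0 ?ltr01.
Qed.

Lemma gibbs_infeasible x : ~~ feasible_x C x -> gibbs x = 0.
Proof. by move/negbTE => fx; rewrite /gibbs fx mul0r. Qed.

Lemma gibbs_ge0 x : 0 <= gibbs x.
Proof.
case fx: (feasible_x C x); first exact/ltW/gibbs_gt0.
by rewrite gibbs_infeasible ?fx.
Qed.

Lemma prod_link_trans_infeasible (b : {ffun E -> 'I_W}) x y :
  feasible_x C x -> ~~ feasible_x C y ->
  (forall j, ~~ zdec C b j -> y j = x j) ->
  \prod_i trans (zdec C b i) x i (y i) = 0.
Proof.
move=> /feasible_xP fx /feasible_xP fy frozen.
have [i [j [Cij yi yj]]] : exists i j, [/\ C i j, y i & y j].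
  apply/not_existsP => no_clash; apply: fy => i j Cij; apply/negP => /andP [yi yj].
  by apply: (no_clash i); exists j.
have busy k l : C k l -> zdec C b k -> ~~ zdec C b l -> y k -> y l ->
    trans (zdec C b k) x k (y k) = 0.
  move=> Ckl -> zl -> yl; have xl : x l by rewrite -frozen.
  by rewrite /link_trans ifT //; apply/existsP; exists l; rewrite Ckl xl.
apply/eqP/prodf_eq0.
case zi: (zdec C b i); case zj: (zdec C b j).
- by case: (zdec_independent (b := b) Cij); rewrite ?zi ?zj.
- by exists i => //; rewrite (busy i j) ?zj.
- by exists j => //; rewrite (busy j i) ?zi // Csym.
- by move: (fx i j Cij); rewrite -!frozen ?zi ?zj // yi yj.
Qed.

Lemma link_detailed_balance (b : {ffun E -> 'I_W}) x y i :
  feasible_x C x -> feasible_x C y -> (forall j, ~~ zdec C b j -> y j = x j) ->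
  gibbs_factor (x i) i * trans (zdec C b i) x i (y i) =
  gibbs_factor (y i) i * trans (zdec C b i) y i (x i).
Proof.
move=> fx fy frozen; rewrite /link_trans.
case zi: (zdec C b i); last by rewrite frozen ?zi.
have same_nbrs : [exists j, C i j && x j] = [exists j, C i j && y j].
  apply: eq_existsb => j; case Cij: (C i j) => //=; rewrite frozen //.
  by apply/negP => zj; apply: (zdec_independent (b := b) Cij); rewrite ?zi.
have off_if_nbr (u : {ffun E -> bool}) : feasible_x C u ->
    [exists j, C i j && u j] -> u i = false.
  move=> /feasible_xP fu /existsP [j /andP [Cij uj]].
  by have := fu i j Cij; rewrite uj andbT => /negbTE.
rewrite -same_nbrs; case: ifP => nbr; first by rewrite !off_if_nbr // -same_nbrs.
by case: (x i); case: (y i); rewrite /gibbs_factor ?mul1r ?mulr1 // -pact_odds.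
Qed.

Lemma csma_detailed_balance x y : gibbs x * kernel x y = gibbs y * kernel y x.
Proof.
rewrite !mulr_sumr; apply: eq_bigr => b _.
rewrite mulrCA [gibbs y * _]mulrCA; congr (_ * _).
have [[j /andP [zj yxj]] | frozen] :=
  pselect (exists j, ~~ zdec C b j && (y j != x j)).
  have stuck (u v : {ffun E -> bool}) : v j != u j ->
      \prod_i trans (zdec C b i) u i (v i) = 0.
    move=> vuj; apply/eqP/prodf_eq0; exists j => //.
    by rewrite /link_trans (negbTE zj) (negbTE vuj).
  by rewrite !stuck ?mulr0 // eq_sym.
have {}frozen j : ~~ zdec C b j -> y j = x j.
  by move=> zj; apply/eqP/negPn/negP => yxj; apply: frozen; exists j; rewrite zj.
have frozen' j : ~~ zdec C b j -> x j = y j by move/frozen.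
rewrite /gibbs; case fx: (feasible_x C x); case fy: (feasible_x C y).
- rewrite !mul1r -!big_split /=; apply: eq_bigr => i _.
  exact: link_detailed_balance.
- by rewrite (@prod_link_trans_infeasible b x y) ?fx ?fy // !mulr0 !mul0r.
- by rewrite (@prod_link_trans_infeasible b y x) ?fx ?fy // !mulr0 !mul0r.
- by rewrite !mul0r.
Qed.

Lemma link_trans_gt0 (z : bool) (x : {ffun E -> bool}) j v :
  (z -> [exists k, C j k && x k] -> v = false) -> (~~ z -> v = x j) ->
  0 < trans z x j v.
Proof.
rewrite /link_trans; case: z => [off_if_nbr _ | _ frozen].
  case: ifP => [nbr | _]; first by rewrite off_if_nbr // eqxx ltr01.
  by case: v {off_if_nbr}; rewrite ?subr_gt0 ?pact_gt0 ?pact_lt1.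
by rewrite frozen // eqxx ltr01.
Qed.

Lemma csma_kernel_toggle_gt0 u u' i :
  feasible_x C u -> feasible_x C u' -> (forall j, j != i -> u' j = u j) ->
  0 < kernel u u'.
Proof.
move=> /feasible_xP fu /feasible_xP fu' same.
pose b0 : {ffun E -> 'I_W} :=
  [ffun j => if j == i then Ordinal (ltnW W2) else Ordinal W2].
(* Link i alone has back-off 0, so it surely wins the control phase; every
   other link keeps its current state with positive probability. *)
have zi : zdec C b0 i.
  by apply: zdec_strict_min => j ji; rewrite !ffunE eqxx (negbTE ji).
have term_gt0 : 0 < (W ^ #|E|)%:R^-1 * \prod_j trans (zdec C b0 j) u j (u' j).
  rewrite mulr_gt0 ?invr_gt0 ?ltr0n ?expn_gt0 ?(ltnW W2) //.
  apply: prodr_gt0 => j _; apply: link_trans_gt0 => [_ /existsP [k /andP [Cjk uk]] | zj].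
    have [eq_ji | ji] := eqVneq j i; last first.
      by rewrite same //; have := fu j k Cjk; rewrite uk andbT => /negbTE.
    have ki : k != i by rewrite -eq_ji; apply: contraTneq Cjk => ->; rewrite Cirr.
    by have := fu' j k Cjk; rewrite (same k) // uk andbT => /negbTE.
  by rewrite same //; apply: contraNneq zj => ->.
apply: (lt_le_trans term_gt0); rewrite /csma_kernel (bigD1 b0) //= lerDl.
apply: sumr_ge0 => b _; rewrite mulr_ge0 ?invr_ge0 ?ler0n //.
by apply: prodr_ge0 => j _; apply: link_trans_ge0.
Qed.

Lemma stationary_gibbs pi :
  stationary C W Q Z pi -> exists c, forall x, pi x = c * gibbs x.
Proof.
case=> pi_ge0 _ pi_infeasible pi_stat.
pose h x := pi x / gibbs x. (* = 0 off the feasible set, where gibbs x = 0 *)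
have pi_h x : pi x = h x * gibbs x.
  case fx: (feasible_x C x); first by rewrite /h divfK // gt_eqF // gibbs_gt0.
  by rewrite gibbs_infeasible ?fx // mulr0 pi_infeasible ?fx.
have h_harmonic y : feasible_x C y -> h y = \sum_x kernel y x * h x.
  move=> fy; apply: (mulIf (lt0r_neq0 (gibbs_gt0 fy))).
  rewrite -pi_h -{1}pi_stat mulr_suml; apply: eq_bigr => x _.
  by rewrite pi_h -mulrA csma_detailed_balance; ring.
have [xm fxm h_le_xm] :
    exists2 xm, feasible_x C xm & forall x, feasible_x C x -> h x <= h xm.
  by case: (arg_maxP h (feasible_idle C)) => xm; exists xm.
have h_le x : h x <= h xm.
  case fx: (feasible_x C x); first exact: h_le_xm.
  by rewrite /h pi_infeasible ?fx // mul0r divr_ge0 ?pi_ge0 ?ltW ?gibbs_gt0.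
have h_const x : feasible_x C x -> h x = h xm.
  move=> fx; apply: (feasible_toggle_connected (P := fun x => h x = h xm) _ fxm fx) => //.
  move=> u u' i fu fu' same hu.
  exact: harmonic_max_step (csma_kernel_ge0 u) (csma_kernel_sum1 u)
    (h_harmonic u fu) h_le hu (csma_kernel_toggle_gt0 fu fu' same).
exists (h xm) => x; rewrite pi_h; case fx: (feasible_x C x); first by rewrite h_const.
by rewrite gibbs_infeasible ?fx // !mulr0.
Qed.

End CsmaChain.

Section ScheduledService.
Variables (R : realType) (E M : finType) (C : rel E) (Q Z : M -> E -> R) (sel : E -> M).
Hypotheses (Q_ge0 : forall m i, 0 <= Q m i) (Z_ge0 : forall m i, 0 <= Z m i)
  (sel_max : forall i m, Q m i + Z m i <= Q (sel i) i + Z (sel i) i).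

Lemma weight_sel i : weight Q Z i = Q (sel i) i + Z (sel i) i.
Proof.
apply/eqP; rewrite eq_le; apply/andP; split.
  by apply: bigmax_le => [|m _]; rewrite ?addr_ge0 ?sel_max.
exact: (le_bigmax _ (fun m => Q m i + Z m i) (sel i)).
Qed.

Lemma Phi3_sched_mu x : Phi3 Q Z (sched_mu sel x) = \sum_i (x i)%:R * weight Q Z i.
Proof.
rewrite /Phi3 exchange_big /=; apply: eq_bigr => i _.
rewrite (bigD1 (sel i)) //= ffunE /= eqxx andbT big1 ?addr0 ?weight_sel //.
by move=> m /negbTE mi; rewrite ffunE /= mi andbF mul0r.
Qed.

Lemma Phi3_sched_mu_ge0 x : 0 <= Phi3 Q Z (sched_mu sel x).
Proof.
rewrite Phi3_sched_mu; apply: sumr_ge0 => i _.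
by rewrite mulr_ge0 ?ler0n // weight_sel addr_ge0.
Qed.

Lemma Phi3_le_sched_mu x mu : feasible C x mu -> Phi3 Q Z mu <= Phi3 Q Z (sched_mu sel x).
Proof.
case/andP => _ /forallP serves.
rewrite Phi3_sched_mu /Phi3 exchange_big /=; apply: ler_sum => i _.
rewrite -(eqP (serves i)) natr_sum mulr_suml; apply: ler_sum => m _.
by rewrite ler_wpM2l ?ler0n // weight_sel sel_max.
Qed.

Lemma Phi3star_le_sched_mu :
  exists2 xs, feasible_x C xs & Phi3star C Q Z <= Phi3 Q Z (sched_mu sel xs).
Proof.
pose Ph x := Phi3 Q Z (sched_mu sel x).
have [xs fxs xs_max] := arg_maxP Ph (feasible_idle C).
exists xs => //; apply/bigmax_leP; split; first exact: Phi3_sched_mu_ge0.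
move=> [x mu] /= fxmu; apply: le_trans (Phi3_le_sched_mu fxmu) _.
by apply: xs_max; case/andP: fxmu.
Qed.

Lemma gibbs_expR_Phi3 x :
  gibbs C Q Z x = (feasible_x C x)%:R * expR (Phi3 Q Z (sched_mu sel x)).
Proof.
rewrite /gibbs Phi3_sched_mu expR_sum; congr (_ * _); apply: eq_bigr => i _.
by rewrite /gibbs_factor; case: (x i); rewrite ?mul1r ?mul0r ?expR0.
Qed.

Lemma gibbs_le_expR_Phi3 x : gibbs C Q Z x <= expR (Phi3 Q Z (sched_mu sel x)).
Proof. by rewrite gibbs_expR_Phi3; case: (feasible_x C x); rewrite ?mul1r ?mul0r ?expR_ge0. Qed.

End ScheduledService.

Theorem theorem3 (R : realType) (E M : finType) (C : rel E)
    (Q Z : M -> E -> R) (W : nat) (sel : E -> M)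
    (pi : {ffun E -> bool} -> R) (theta delta : R) :
  symmetric C -> irreflexive C ->
  (2 <= W)%N ->
  (forall m i, 0 <= Q m i) -> (forall m i, 0 <= Z m i) ->
  (forall i m, Q m i + Z m i <= Q (sel i) i + Z (sel i) i) ->
  stationary C W Q Z pi ->
  0 < theta < 1 -> 0 < delta < 1 ->
  Phi3star C Q Z >= theta^-1 * (#|E|%:R * ln 2 + ln delta^-1) ->
  \sum_(x | Phi3 Q Z (sched_mu sel x) >= (1 - theta) * Phi3star C Q Z) pi x
    > 1 - delta.
Proof.
move=> Csym Cirr W2 Q_ge0 Z_ge0 sel_max pi_stat /andP [th_gt0 _] /andP [d_gt0 d_lt1].
move=> Phi_large.
have [c pi_gibbs] := stationary_gibbs Csym Cirr W2 pi_stat.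
have [xs fxs Ps_le] := Phi3star_le_sched_mu C Q_ge0 Z_ge0 sel_max.
set Ps := Phi3star C Q Z in Phi_large Ps_le *.
pose good x := (1 - theta) * Ps <= Phi3 Q Z (sched_mu sel x).
have Ps_gt0 : 0 < Ps.
  apply: lt_le_trans Phi_large; rewrite mulr_gt0 ?invr_gt0 // ltr_wpDl //.
    by rewrite mulr_ge0 ?ler0n // ln_ge0 ?ler1n.
  by rewrite ln_gt0 // invf_gt1.
have bad_lt : \sum_(x | ~~ good x) pi x < delta.
  apply: lt_le_trans (pow2_expR_tail_le th_gt0 d_gt0 Phi_large).
  rewrite (_ : 2 ^+ #|E| = #|{ffun E -> bool}|%:R); last first.
    by rewrite card_ffun card_bool natrX.
  apply: (gibbs_mass_lt (bad := [pred x | ~~ good x]) (xs := xs)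
    (@gibbs_ge0 _ _ _ C Q Z) pi_gibbs); rewrite ?expR_gt0 //=.
  - by case: pi_stat.
  - by rewrite (gibbs_expR_Phi3 C Q_ge0 Z_ge0 sel_max) fxs mul1r ler_expR.
  - by rewrite negbK /good; apply: le_trans Ps_le; nra.
  - move=> x bad_x; apply: le_trans (gibbs_le_expR_Phi3 C Q_ge0 Z_ge0 sel_max x) _.
    by rewrite ler_expR ltW // ltNge.
have pi_split : \sum_(x | good x) pi x + \sum_(x | ~~ good x) pi x = 1.
  by case: pi_stat => _ <- _ _; rewrite [RHS](bigID good).
change (1 - delta < \sum_(x | good x) pi x); lra.
Qed.
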